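(* For every integer $n\geq 1$, $$(2-t)\bigl(B_n(t)S_{n+1}(t)-S_n(t)B_{n+1}(t)\bigr)=t^{\lfloor\log_2 n\rfloor}\bigl(B_{n+1}(t)-B_n(t)-t+1\bigr).$$
   Context: The Stern polynomials $B_n(t)\in\mathbb{Z}[t]$ are defined by $B_0(t)=0$, $B_1(t)=1$, and for $n\geq 1$: $B_{2n}(t)=tB_n(t)$, $B_{2n+1}(t)=B_n(t)+B_{n+1}(t)$. The polynomials $S_n(t)$, $n\ge1$, are defined by $S_1(t)=S_2(t)=0$ and, for $k\geq 1$, $S_{2k}(t)=tS_k(t)$, $S_{2k+1}(t)=S_k(t)+S_{k+1}(t)+t^{\lfloor\log_2 k\rfloor}$ (so e.g. $S_3=1$, $S_5=1+t$, $S_9=1+t+t^2$). *)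

From HB Require Import structures.
From mathcomp Require Import all_boot all_order all_algebra.
Set Implicit Arguments. Unset Strict Implicit. Unset Printing Implicit Defensive.
Import GRing.Theory.
Local Open Scope ring_scope.

(* Fuel-based definition of Stern polynomials; fuel n suffices for index n. *)
Fixpoint Bfuel (fuel n : nat) : {poly int} :=
  match fuel with
  | 0%N => 0
  | f.+1 =>
    if n == 0%N then 0
    else if n == 1%N then 1
    else if odd n then Bfuel f n./2 + Bfuel f n./2.+1
    else 'X * Bfuel f n./2
  end.

Definition B (n : nat) : {poly int} := Bfuel n n.

(* S_1 = S_2 = 0, S_{2k} = t S_k, S_{2k+1} = S_k + S_{k+1} + t^{floor(log2 k)};
   S_0 is not defined in the paper and is set to 0 here (never used). *)
Fixpoint Sfuel (fuel n : nat) : {poly int} :=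
  match fuel with
  | 0%N => 0
  | f.+1 =>
    if (n <= 2)%N then 0
    else if odd n then Sfuel f n./2 + Sfuel f n./2.+1 + 'X ^+ trunc_log 2 n./2
    else 'X * Sfuel f n./2
  end.

Definition S (n : nat) : {poly int} := Sfuel n n.

From HB Require Import structures.
From mathcomp Require Import all_boot all_order all_algebra.
From mathcomp Require Import ring zify.
Import GRing.Theory.
Local Open Scope ring_scope.

(* Write  L n = (2 - t) (B_n S_{n+1} - S_n B_{n+1})  and
   R n = t^{floor(log2 n)} (B_{n+1} - B_n - t + 1)  for the two sides of the
   identity.  Using the binary recurrences of B and S, both sides obey the same
   "doubling" recurrences: with  c = (2 - t) t^{floor(log2 k) + 1},
     X(2k)   = t X(k) + c B_k,        X(2k+1) = t X(k) - c B_{k+1}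
   for X = L and X = R. *)

(* The fuel-based evaluations do not depend on the fuel, once it is at least
   the index: every recursive call halves the index. *)
Lemma Bfuel_stable f g n : (n <= f)%N -> (n <= g)%N -> Bfuel f n = Bfuel g n.
Proof.
elim: f g n => [|f IH] [|g] n /=; rewrite ?leqn0; [by []|by move/eqP->|by move=> _ /eqP->|].
move=> hf hg; case: eqP => // /eqP n0; case: eqP => // /eqP n1.
by case: ifP => odd_n; rewrite !(IH g) //; lia.
Qed.

Lemma Sfuel_stable f g n : (n <= f)%N -> (n <= g)%N -> Sfuel f n = Sfuel g n.
Proof.
elim: f g n => [|f IH] [|g] n /=; rewrite ?leqn0; [by []|by move/eqP->|by move=> _ /eqP->|].
move=> hf hg; case: ifP => // n_gt2.
by case: ifP => odd_n; rewrite !(IH g) //; lia.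
Qed.

Lemma Bfuel_B f n : (n <= f)%N -> Bfuel f n = B n.
Proof. by move=> hn; apply: Bfuel_stable. Qed.

Lemma Sfuel_S f n : (n <= f)%N -> Sfuel f n = S n.
Proof. by move=> hn; apply: Sfuel_stable. Qed.

Lemma B_rec n : (2 <= n)%N ->
  B n = if odd n then B n./2 + B n./2.+1 else 'X * B n./2.
Proof.
case: n => [|m] // hm; rewrite {1}/B /= ifN_eq; last by lia.
by case: ifP => odd_m; rewrite !(@Bfuel_B m) //; lia.
Qed.

Lemma S_rec n : (3 <= n)%N ->
  S n = if odd n then S n./2 + S n./2.+1 + 'X ^+ trunc_log 2 n./2
        else 'X * S n./2.
Proof.
case: n => [|m] // hm; rewrite {1}/S /= ifN; last by lia.
by case: ifP => odd_m; rewrite !(@Sfuel_S m) //; lia.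
Qed.

Lemma B_double k : (0 < k)%N -> B k.*2 = 'X * B k.
Proof. by move=> hk; rewrite B_rec ?odd_double ?doubleK //; lia. Qed.

Lemma B_double1 k : (0 < k)%N -> B k.*2.+1 = B k + B k.+1.
Proof. by move=> hk; rewrite B_rec /= ?odd_double ?uphalf_double //; lia. Qed.

Lemma S_double k : (0 < k)%N -> S k.*2 = 'X * S k.
Proof.
move=> hk; have [-> | k1] := eqVneq k 1%N; first by rewrite /S /= mulr0.
by rewrite S_rec ?odd_double ?doubleK //; lia.
Qed.

Lemma S_double1 k : (0 < k)%N ->
  S k.*2.+1 = S k + S k.+1 + 'X ^+ trunc_log 2 k.
Proof. by move=> hk; rewrite S_rec /= ?odd_double ?uphalf_double //; lia. Qed.

Definition lhs (n : nat) : {poly int} :=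
  (2%:P - 'X) * (B n * S n.+1 - S n * B n.+1).

Definition rhs (n : nat) : {poly int} :=
  'X ^+ trunc_log 2 n * (B n.+1 - B n - 'X + 1).

Section Doubling.
Variable k : nat.
Hypothesis k_gt0 : (0 < k)%N.

Let c : {poly int} := (2 - 'X) * 'X ^+ (trunc_log 2 k).+1.

Lemma lhs_double : lhs k.*2 = 'X * lhs k + c * B k.
Proof.
rewrite /lhs /c B_double ?B_double1 ?S_double ?S_double1 //.
by rewrite exprS; ring.
Qed.

Lemma rhs_double : rhs k.*2 = 'X * rhs k + c * B k.
Proof.
rewrite /rhs /c B_double ?B_double1 // trunc_log2_double //.
by rewrite exprS; ring.
Qed.

Lemma lhs_double1 : lhs k.*2.+1 = 'X * lhs k - c * B k.+1.
Proof.
rewrite /lhs /c -doubleS B_double1 ?B_double ?S_double1 ?S_double //.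
by rewrite exprS; ring.
Qed.

Lemma rhs_double1 : rhs k.*2.+1 = 'X * rhs k - c * B k.+1.
Proof.
rewrite /rhs /c -doubleS B_double1 ?B_double //.
rewrite (@trunc_log2S k.*2.+1) /= ?uphalf_double; last by lia.
by rewrite exprS; ring.
Qed.

End Doubling.

Theorem mainTheorem13 (n : nat) (hn : (1 <= n)%N) :
  (2%:P - 'X) * (B n * S n.+1 - S n * B n.+1) =
  'X ^+ trunc_log 2 n * (B n.+1 - B n - 'X + 1).
Proof.
rewrite -[LHS]/(lhs n) -[RHS]/(rhs n).
elim/ltn_ind: n hn => n IH hn.
have [-> | n1] := eqVneq n 1%N.
  by rewrite /lhs /rhs /B /S /= trunc_log1; ring.
have k_gt0 : (0 < n./2)%N by lia.
have IHk : lhs n./2 = rhs n./2 by apply: IH => //; lia.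
rewrite -[n]odd_double_half; case: (odd n) => /=.
- by rewrite lhs_double1 // rhs_double1 // IHk.
- by rewrite lhs_double // rhs_double // IHk.
Qed.
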